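(* Let $B$ be a log-product expression of degree $n$ and let $\gamma \geq 1$. Then there exist an integer $m \geq \log (1+n /\gamma)$ and $2m$ homogeneous expressions $P_1, \dots, P_{m} , S_1, \dots, S_{m}$ (possibly equal to $\epsilon$) such that $B \equiv P_1 P_2 \cdots P_{m} S_{m} S_{m-1} \cdots S_1$, $\deg P_i + \deg S_i \geq \gamma$ for all $i \in \{1,\dots,m-1\}$, and $\deg P_{m} +\deg S_{m} \leq \gamma$.
   Context: Regular expressions (without star, without $\emptyset$) are built from $\epsilon$ and letters by union and concatenation; $R\equiv R'$ means they describe the same language. A homogeneous expression describes a language all of whose words have the same length, its degree $\deg R$. A homogeneous expression $B$ is log-product if it is a letter, or there are homogeneous expressions $B_1,B_2$ with $B_1$ log-product, $\deg B_1\ge\deg B_2$ and $B=B_1B_2$ or $B=B_2B_1$. Logarithms are base 2. *)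

From Stdlib Require Import Reals List Arith.
Import ListNotations.
Set Implicit Arguments.

Inductive re (A : Type) : Type :=
| Eps : re A
| Let : A -> re A
| Plus : re A -> re A -> re A
| Cat : re A -> re A -> re A.
Arguments Eps {A}.

Fixpoint lang {A : Type} (r : re A) (w : list A) : Prop :=
  match r with
  | Eps => w = []
  | Let a => w = [a]
  | Plus r1 r2 => lang r1 w \/ lang r2 w
  | Cat r1 r2 => exists u v, w = u ++ v /\ lang r1 u /\ lang r2 v
  end.

Definition re_equiv {A : Type} (r s : re A) : Prop :=
  forall w, lang r w <-> lang s w.

(* r is homogeneous of degree d: every word of its language has length d.
   (Languages of star-free, emptyset-free expressions are nonempty, so the
   degree of a homogeneous expression is unique.) *)
Definition has_deg {A : Type} (r : re A) (d : nat) : Prop :=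
  forall w, lang r w -> length w = d.

Definition homogeneous {A : Type} (r : re A) : Prop := exists d, has_deg r d.

Inductive log_product {A : Type} : re A -> Prop :=
| lp_letter : forall a, log_product (Let a)
| lp_left : forall B1 B2 d1 d2,
    log_product B1 -> has_deg B1 d1 -> has_deg B2 d2 -> (d2 <= d1)%nat ->
    log_product (Cat B1 B2)
| lp_right : forall B1 B2 d1 d2,
    log_product B1 -> has_deg B1 d1 -> has_deg B2 d2 -> (d2 <= d1)%nat ->
    log_product (Cat B2 B1).

Fixpoint cat_list {A : Type} (l : list (re A)) : re A :=
  match l with
  | [] => Eps
  | [r] => r
  | r :: l' => Cat r (cat_list l')
  end.

Definition log2 (x : R) : R := (ln x / ln 2)%R.

(** Peel [B] from the outside, carrying a context [X _ Y] of degree below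
    [gamma].  For [B = B1 B2] (or [B2 B1]) with [deg B2 <= deg B1], the factor
    [B2] is absorbed into the context if the context stays below [gamma];
    otherwise the context together with [B2] becomes an outer layer of degree at
    least [gamma], and one restarts on [B1] with the empty context.  That layer
    has degree below [gamma + deg B1], so if [deg B1 <= gamma (2^k - 1)] with [k]
    layers, the whole is covered by [k + 1] layers and has degree below
    [gamma + 2 gamma (2^k - 1) = gamma (2^(k+1) - 1)].  Hence
    [n <= gamma (2^m - 1)], i.e. [m >= log (1 + n / gamma)]. *)

From Stdlib Require Import Reals List Arith Lra Lia Setoid Morphisms.
Import ListNotations.
Set Implicit Arguments.

#[export] Instance re_equiv_Equivalence (A : Type) : Equivalence (@re_equiv A).
Proof. split; unfold re_equiv; firstorder. Qed.

#[export] Instance Cat_Proper (A : Type) :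
  Proper (re_equiv ==> re_equiv ==> re_equiv) (@Cat A).
Proof.
  intros r r' Hr s s' Hs w; simpl.
  split; intros (u & v & -> & Hu & Hv); exists u, v; firstorder.
Qed.

Lemma map_nth_sub_seq (T U : Type) (f : T -> U) (l : list T) (d : T) (s : nat) :
  map (fun i => f (nth (i - s) l d)) (seq s (length l)) = map f l.
Proof.
  revert s; induction l as [|t l IH]; intros s; simpl; [reflexivity|].
  rewrite Nat.sub_diag, <- (IH (S s)); f_equal.
  apply map_ext_in; intros i Hi; apply in_seq in Hi.
  now replace (i - s) with (S (i - S s)) by lia.
Qed.

Lemma log2_le_of_le_pow (x : R) (m : nat) : (0 < x)%R -> (x <= 2 ^ m)%R -> (log2 x <= INR m)%R.
Proof.
  intros Hx Hxm.
  assert (Hln2 : (0 < ln 2)%R) by (rewrite <- ln_1; apply ln_increasing; lra).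
  assert (Hln : (ln x <= INR m * ln 2)%R).
  { rewrite <- ln_pow by lra.
    destruct (Rle_lt_or_eq_dec _ _ Hxm) as [Hlt | ->]; [left; apply ln_increasing|]; lra. }
  unfold log2; apply Rmult_le_reg_r with (ln 2); [lra|].
  unfold Rdiv; rewrite Rmult_assoc, Rinv_l; lra.
Qed.

Lemma log2_one_plus_div_le (g : R) (n m : nat) :
  (0 < g)%R -> (INR n <= g * (2 ^ m - 1))%R -> (log2 (1 + INR n / g) <= INR m)%R.
Proof.
  intros Hg Hn; apply log2_le_of_le_pow.
  - apply Rplus_lt_le_0_compat; [lra|].
    apply Rmult_le_pos; [apply pos_INR|left; apply Rinv_0_lt_compat; lra].
  - apply Rmult_le_reg_l with g; [lra|].
    replace (g * (1 + INR n / g))%R with (g + INR n)%R by (field; lra); lra.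
Qed.

Section Layers.
Context {A : Type}.
Implicit Types r s t X Y : re A.

Lemma cat_assoc r s t : re_equiv (Cat r (Cat s t)) (Cat (Cat r s) t).
Proof.
  intros w; simpl; split.
  - intros (u & v & -> & Hu & u' & v' & -> & Hu' & Hv').
    exists (u ++ u'), v'; rewrite app_assoc; eauto 7.
  - intros (u & v & -> & (u' & v' & -> & Hu' & Hv') & Hv).
    exists u', (v' ++ v); rewrite app_assoc; eauto 7.
Qed.

Lemma cat_eps_l r : re_equiv (Cat Eps r) r.
Proof.
  intros w; simpl; split; [now intros (u & v & -> & -> & Hv)|].
  intros Hw; exists [], w; auto.
Qed.

Lemma cat_eps_r r : re_equiv (Cat r Eps) r.
Proof.
  intros w; simpl; split; [now intros (u & v & -> & Hu & ->); rewrite app_nil_r|].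
  intros Hw; exists w, []; rewrite app_nil_r; auto.
Qed.

Lemma fold_cat_app (l1 l2 : list (re A)) :
  re_equiv (fold_right (@Cat A) Eps (l1 ++ l2))
           (Cat (fold_right (@Cat A) Eps l1) (fold_right (@Cat A) Eps l2)).
Proof.
  induction l1 as [|r l1 IH]; simpl; [now rewrite cat_eps_l|].
  now rewrite IH, cat_assoc.
Qed.

Lemma cat_list_fold (l : list (re A)) : re_equiv (cat_list l) (fold_right (@Cat A) Eps l).
Proof.
  induction l as [|r [|r' l] IH]; simpl in *; [reflexivity| |].
  - now rewrite cat_eps_r.
  - now rewrite IH.
Qed.

Lemma lang_nonempty r : exists w, lang r w.
Proof.
  induction r as [|a|r1 [w1 H1] r2 _|r1 [w1 H1] r2 [w2 H2]]; simpl; eauto.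
  exists (w1 ++ w2), w1, w2; auto.
Qed.

Lemma has_deg_unique r d e : has_deg r d -> has_deg r e -> d = e.
Proof. intros Hd He; destruct (lang_nonempty r) as [w Hw]; now rewrite <- (Hd w), (He w). Qed.

Lemma has_deg_eps : has_deg (@Eps A) 0.
Proof. now intros w ->. Qed.

Lemma has_deg_let (a : A) : has_deg (Let a) 1.
Proof. now intros w ->. Qed.

Lemma has_deg_cat r s d e : has_deg r d -> has_deg s e -> has_deg (Cat r s) (d + e).
Proof. intros Hr Hs w (u & v & -> & Hu & Hv); rewrite length_app, (Hr u), (Hs v); auto. Qed.

Record layer : Type := Layer { prefix : re A; suffix : re A; dprefix : nat; dsuffix : nat }.

Definition empty_layer : layer := Layer Eps Eps 0 0.

Definition layer_deg (l : layer) : nat := dprefix l + dsuffix l.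

Definition layer_wf (l : layer) : Prop :=
  has_deg (prefix l) (dprefix l) /\ has_deg (suffix l) (dsuffix l).

Fixpoint nest (L : list layer) : re A :=
  match L with
  | [] => Eps
  | l :: L' => Cat (prefix l) (Cat (nest L') (suffix l))
  end.

Lemma nest_fold L :
  re_equiv (nest L) (fold_right (@Cat A) Eps (map prefix L ++ rev (map suffix L))).
Proof.
  induction L as [|l L IH]; simpl; [reflexivity|].
  now rewrite IH, !fold_cat_app; simpl; rewrite cat_eps_r, <- cat_assoc.
Qed.

Inductive layered (g : R) : list layer -> Prop :=
| layered_one l : (INR (layer_deg l) <= g)%R -> layered g [l]
| layered_cons l L : (g <= INR (layer_deg l))%R -> layered g L -> layered g (l :: L).

Lemma layered_nth_ge g L k :
  layered g L -> S k < length L -> (g <= INR (layer_deg (nth k L empty_layer)))%R.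
Proof.
  intros HL; revert k; induction HL as [l _|l L Hl _ IH]; intros [|k] Hk;
    simpl in *; try lia; auto with arith.
Qed.

Lemma layered_last_le g L :
  layered g L -> (INR (layer_deg (nth (length L - 1) L empty_layer)) <= g)%R.
Proof.
  induction 1 as [l Hl|l L _ HL IH]; [exact Hl|].
  destruct HL; simpl in *; rewrite ?Nat.sub_0_r in IH; exact IH.
Qed.

Definition decomposition (g : R) r (L : list layer) : Prop :=
  Forall layer_wf L /\ layered g L /\ re_equiv r (nest L).

Lemma decomposition_equiv g r r' L :
  re_equiv r r' -> decomposition g r' L -> decomposition g r L.
Proof. intros Hr (Hwf & Hl & He); split; [|split]; auto; now rewrite Hr. Qed.

Lemma decomposition_eps g : (0 <= g)%R -> decomposition g Eps [empty_layer].
Proof.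
  intros Hg; split; [|split].
  - repeat constructor; apply has_deg_eps.
  - constructor; simpl; lra.
  - simpl; now rewrite cat_eps_l, cat_eps_r.
Qed.

Lemma decomposition_single g X B Y x n y :
  has_deg X x -> has_deg B n -> has_deg Y y -> (INR (x + n + y) <= g)%R ->
  decomposition g (Cat X (Cat B Y)) [Layer (Cat X B) Y (x + n) y].
Proof.
  intros HX HB HY Hg; split; [|split].
  - repeat constructor; simpl; auto using has_deg_cat.
  - now constructor.
  - simpl; now rewrite cat_eps_l, cat_assoc.
Qed.

Lemma decomposition_cons g X Y x y r L :
  has_deg X x -> has_deg Y y -> (g <= INR (x + y))%R -> decomposition g r L ->
  decomposition g (Cat X (Cat r Y)) (Layer X Y x y :: L).
Proof.
  intros HX HY Hg (Hwf & Hl & He); split; [|split].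
  - now repeat constructor.
  - now constructor.
  - simpl; now rewrite He.
Qed.

Lemma outer_layer_bound g x y n k :
  (INR (x + y) < g + INR n)%R -> (INR n <= g * (2 ^ k - 1))%R ->
  (INR (x + n + y) <= g * (2 ^ S k - 1))%R.
Proof. intros Hxy Hk; rewrite !plus_INR in *; simpl; lra. Qed.

Definition peelable (g : R) (B : re A) (n : nat) : Prop :=
  forall X Y x y, has_deg X x -> has_deg Y y -> (INR (x + y) < g)%R ->
  exists L, decomposition g (Cat X (Cat B Y)) L /\
            (INR (x + n + y) <= g * (2 ^ length L - 1))%R.

Lemma peelable_let g (a : A) : (1 <= g)%R -> peelable g (Let a) 1.
Proof.
  intros Hg X Y x y HX HY Hxy.
  destruct (Rle_lt_dec (INR (x + 1 + y)) g) as [Hfit|Hover].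
  - exists [Layer (Cat X (Let a)) Y (x + 1) y]; split.
    + apply decomposition_single; auto using has_deg_let.
    + simpl length; rewrite pow_1; lra.
  - exists [Layer (Cat X (Let a)) Y (x + 1) y; empty_layer]; split.
    + apply decomposition_equiv with (Cat (Cat X (Let a)) (Cat Eps Y)).
      { now rewrite cat_eps_l, cat_assoc. }
      apply decomposition_cons; auto using has_deg_cat, has_deg_let.
      * lra.
      * apply decomposition_eps; lra.
    + rewrite !plus_INR in *; simpl; lra.
Qed.

(** A context that is too long to be carried down becomes the outer layer. *)
Lemma peelable_in_context g B n X Y x y :
  (0 < g)%R -> peelable g B n -> has_deg X x -> has_deg Y y ->
  (INR (x + y) < g + INR n)%R ->
  exists L, decomposition g (Cat X (Cat B Y)) L /\
            (INR (x + n + y) <= g * (2 ^ length L - 1))%R.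
Proof.
  intros Hg HB HX HY Hxy.
  destruct (Rlt_le_dec (INR (x + y)) g) as [Hshort|Hlong]; [exact (HB X Y x y HX HY Hshort)|].
  destruct (HB Eps Eps 0 0 has_deg_eps has_deg_eps) as (L & HL & Hk); [simpl; lra|].
  exists (Layer X Y x y :: L); split.
  - apply decomposition_cons; auto.
    apply decomposition_equiv with (Cat Eps (Cat B Eps)); [|exact HL].
    now rewrite cat_eps_l, cat_eps_r.
  - rewrite Nat.add_0_r in Hk; simpl length; now apply outer_layer_bound.
Qed.

Lemma peelable_cat_l g B1 B2 d1 d2 :
  (0 < g)%R -> peelable g B1 d1 -> has_deg B2 d2 -> d2 <= d1 ->
  peelable g (Cat B1 B2) (d1 + d2).
Proof.
  intros Hg HB1 H2 Hd X Y x y HX HY Hxy.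
  destruct (peelable_in_context Hg HB1 HX (has_deg_cat H2 HY)) as (L & HL & Hk).
  { apply le_INR in Hd; rewrite !plus_INR in *; lra. }
  exists L; split.
  - apply decomposition_equiv with (Cat X (Cat B1 (Cat B2 Y))); [|exact HL].
    now rewrite (cat_assoc B1 B2 Y).
  - now replace (x + (d1 + d2) + y) with (x + d1 + (d2 + y)) by lia.
Qed.

Lemma peelable_cat_r g B1 B2 d1 d2 :
  (0 < g)%R -> peelable g B1 d1 -> has_deg B2 d2 -> d2 <= d1 ->
  peelable g (Cat B2 B1) (d2 + d1).
Proof.
  intros Hg HB1 H2 Hd X Y x y HX HY Hxy.
  destruct (peelable_in_context Hg HB1 (has_deg_cat HX H2) HY) as (L & HL & Hk).
  { apply le_INR in Hd; rewrite !plus_INR in *; lra. }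
  exists L; split.
  - apply decomposition_equiv with (Cat (Cat X B2) (Cat B1 Y)); [|exact HL].
    now rewrite <- (cat_assoc B2 B1 Y), (cat_assoc X B2).
  - now replace (x + (d2 + d1) + y) with (x + d2 + d1 + y) by lia.
Qed.

Lemma log_product_peelable g (B : re A) n :
  (1 <= g)%R -> log_product B -> has_deg B n -> peelable g B n.
Proof.
  intros Hg HB; revert n.
  induction HB as [a|B1 B2 d1 d2 _ IH H1 H2 Hd|B1 B2 d1 d2 _ IH H1 H2 Hd]; intros n Hn.
  - rewrite (has_deg_unique Hn (has_deg_let (a := a))); now apply peelable_let.
  - rewrite (has_deg_unique Hn (has_deg_cat H1 H2)); apply peelable_cat_l; auto; lra.
  - rewrite (has_deg_unique Hn (has_deg_cat H2 H1)); apply peelable_cat_r; auto; lra.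
Qed.

End Layers.

Theorem proposition6p7 (A : Type) (B : re A) (n : nat) (gamma : R) :
  log_product B -> has_deg B n -> (1 <= gamma)%R ->
  exists (m : nat) (P S : nat -> re A) (dP dS : nat -> nat),
    (log2 (1 + INR n / gamma) <= INR m)%R /\
    (forall i, (1 <= i <= m)%nat -> has_deg (P i) (dP i) /\ has_deg (S i) (dS i)) /\
    re_equiv B (cat_list (map P (seq 1 m) ++ map S (rev (seq 1 m)))) /\
    (forall i, (1 <= i <= m - 1)%nat -> (gamma <= INR (dP i + dS i))%R) /\
    (INR (dP m + dS m) <= gamma)%R.
Proof.
  intros HB Hn Hg.
  destruct (log_product_peelable Hg HB Hn has_deg_eps has_deg_eps)
    as (L & (Hwf & Hlayered & Heq) & Hbound); [simpl; lra|].
  rewrite Nat.add_0_r in Hbound; simpl in Hbound.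
  set (layer_at i := nth (i - 1) L empty_layer).
  exists (length L), (fun i => prefix (layer_at i)), (fun i => suffix (layer_at i)),
    (fun i => dprefix (layer_at i)), (fun i => dsuffix (layer_at i)).
  split; [|split; [|split; [|split]]].
  - apply log2_one_plus_div_le; [lra|exact Hbound].
  - intros i Hi; apply (proj1 (Forall_forall _ _) Hwf), nth_In; lia.
  - unfold layer_at; rewrite map_rev, !map_nth_sub_seq, cat_list_fold, <- nest_fold, <- Heq.
    now rewrite cat_eps_l, cat_eps_r.
  - intros i Hi; apply (layered_nth_ge Hlayered); lia.
  - apply (layered_last_le Hlayered).
Qed.
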